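(* Let $\mathbb{A}$ be a countably infinite homogeneous oligomorphic structure with oligomorphic approximation, and let $\mathbb{F}$ be a field of characteristic $0$. Then $\mathbb{A}$ has the finite length property over $\mathbb{F}$.
   Context: Homogeneous: every isomorphism between finite substructures extends to an automorphism. Oligomorphic: $\operatorname{Aut}(\mathbb{A})$ has finitely many orbits on each $\mathbb{A}^d$. Oligomorphic approximation: for every $d\ge1$ there is a family $\mathscr{B}$ of finite substructures of $\mathbb{A}$ such that (1) every finite substructure of $\mathbb{A}$ is a substructure of some $\mathbb{B}\in\mathscr{B}$, and (2) there is a finite bound, uniform over $\mathbb{B}\in\mathscr{B}$, on the number of $\operatorname{Aut}(\mathbb{B})$-orbits on $\mathbb{B}^d$. An orbit-finite set over $\mathbb{A}$ is obtained from some $\mathbb{A}^d$ by restricting to an $\operatorname{Aut}(\mathbb{A})$-invariant subset and quotienting by an $\operatorname{Aut}(\mathbb{A})$-invariant equivalence relation. $\operatorname{Lin}_{\mathbb{F}}X$ is the space of finite formal $\mathbb{F}$-linear combinations of elements of $X$ with the induced linear action of $\operatorname{Aut}(\mathbb{A})$; equivariant subspaces are those invariant under this action. The length of $\operatorname{Lin}_{\mathbb{F}}X$ is the supremum of $n$ such that there is a chain $V_0\subsetneq V_1\subsetneq\dots\subsetneq V_n$ of equivariant subspaces. $\mathbb{A}$ has the finite length property over $\mathbb{F}$ if $\operatorname{Lin}_{\mathbb{F}}X$ has finite length for every orbit-finite set $X$ over $\mathbb{A}$. *)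

From Stdlib Require List.
From mathcomp Require Import all_boot all_algebra.
Set Implicit Arguments. Unset Strict Implicit. Unset Printing Implicit Defensive.
Import GRing.Theory.
Local Open Scope ring_scope.

Record relstr := RelStr {
  carrier : Type;
  sym : Type;
  arity : sym -> nat;
  rel : forall s : sym, ('I_(arity s) -> carrier) -> Prop
}.

Section Defs.
Variable M : relstr.
Local Notation A := (carrier M).

Definition countably_infinite : Prop :=
  exists f : nat -> A, bijective f.

Definition isAut (sigma : A -> A) : Prop :=
  bijective sigma /\
  forall (s : sym M) (t : 'I_(arity s) -> A), rel t <-> rel (sigma \o t).

Definition finite_subset (B : A -> Prop) : Prop :=
  exists l : seq A, forall x, B x -> List.In x l.

Definition partial_iso (B : A -> Prop) (g : A -> A) : Prop :=
  (forall x y, B x -> B y -> g x = g y -> x = y) /\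
  forall (s : sym M) (t : 'I_(arity s) -> A),
    (forall i, B (t i)) -> (rel t <-> rel (g \o t)).

Definition homogeneous : Prop :=
  forall (B : A -> Prop) (g : A -> A),
    finite_subset B -> partial_iso B g ->
    exists sigma, isAut sigma /\ forall x, B x -> sigma x = g x.

Definition oligomorphic : Prop :=
  forall d : nat, exists reps : seq ('I_d -> A),
    forall t : 'I_d -> A, exists r, List.In r reps /\
      exists sigma, isAut sigma /\ forall i, t i = sigma (r i).

(* automorphisms of the induced substructure on B (values outside B irrelevant) *)
Definition isSubAut (B : A -> Prop) (g : A -> A) : Prop :=
  (forall x, B x -> B (g x)) /\
  (forall y, B y -> exists x, B x /\ g x = y) /\
  partial_iso B g.

Definition at_most_orbits (B : A -> Prop) (d N : nat) : Prop :=
  exists reps : seq ('I_d -> A),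
    (size reps <= N)%N /\
    (forall r, List.In r reps -> forall i, B (r i)) /\
    forall t : 'I_d -> A, (forall i, B (t i)) ->
      exists r, List.In r reps /\
        exists g, isSubAut B g /\ forall i, t i = g (r i).

Definition oligomorphic_approximation : Prop :=
  forall d : nat, (1 <= d)%N ->
    exists Bs : (A -> Prop) -> Prop,
      (forall B, Bs B -> finite_subset B) /\
      (forall C, finite_subset C -> exists B, Bs B /\ forall x, C x -> B x) /\
      exists N : nat, forall B, Bs B -> at_most_orbits B d N.

(* Data of an orbit-finite set X = S / E with S ⊆ A^d invariant and
   E an invariant equivalence relation on S. *)
Definition orbit_finite_data (d : nat) (S : ('I_d -> A) -> Prop)
    (E : ('I_d -> A) -> ('I_d -> A) -> Prop) : Prop :=
  (forall sigma t, isAut sigma -> S t -> S (sigma \o t)) /\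
  (forall t, S t -> E t t) /\
  (forall t u, E t u -> E u t) /\
  (forall t u w, E t u -> E u w -> E t w) /\
  (forall t u, E t u -> S t /\ S u) /\
  (forall sigma t u, isAut sigma -> E t u -> E (sigma \o t) (sigma \o u)).

Variable F : fieldType.

(* An element of Lin_F (S/E) is represented as the coefficient function
   t |-> coefficient of the class [t], on tuples: zero off S, constant on
   E-classes, nonzero on finitely many classes. *)
Definition inLin (d : nat) (S : ('I_d -> A) -> Prop)
    (E : ('I_d -> A) -> ('I_d -> A) -> Prop) (v : ('I_d -> A) -> F) : Prop :=
  (forall t, ~ S t -> v t = 0) /\
  (forall t u, E t u -> v t = v u) /\
  exists l : seq ('I_d -> A),
    forall t, v t <> 0 -> exists r, List.In r l /\ E r t.

(* linear action: (sigma . v)(t) = v(sigma^-1 \o t), tau = sigma^-1 *)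
Definition equivariant_subspace (d : nat) (S : ('I_d -> A) -> Prop)
    (E : ('I_d -> A) -> ('I_d -> A) -> Prop)
    (W : (('I_d -> A) -> F) -> Prop) : Prop :=
  (forall v, W v -> inLin S E v) /\
  W (fun _ => 0) /\
  (forall u v, W u -> W v -> W (fun t => u t + v t)) /\
  (forall (a : F) v, W v -> W (fun t => a * v t)) /\
  (forall sigma tau v, isAut sigma -> cancel sigma tau -> cancel tau sigma ->
     W v -> W (fun t => v (tau \o t))).

Definition equivariant_chain (d : nat) (S : ('I_d -> A) -> Prop)
    (E : ('I_d -> A) -> ('I_d -> A) -> Prop)
    (n : nat) (V : nat -> (('I_d -> A) -> F) -> Prop) : Prop :=
  (forall i, (i <= n)%N -> equivariant_subspace S E (V i)) /\
  (forall i, (i < n)%N ->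
     (forall v, V i v -> V i.+1 v) /\ ~ (forall v, V i.+1 v -> V i v)).

Definition finite_length (d : nat) (S : ('I_d -> A) -> Prop)
    (E : ('I_d -> A) -> ('I_d -> A) -> Prop) : Prop :=
  exists N : nat, forall n V, equivariant_chain S E n V -> (n <= N)%N.

Definition finite_length_property : Prop :=
  forall (d : nat) (S : ('I_d -> A) -> Prop) E, orbit_finite_data S E -> finite_length S E.

End Defs.

(* Let X = S/E with S a subset of A^d, and V_0 < ... < V_n a strict chain of
   equivariant subspaces of Lin X.  Pick v_i in V_(i+1) \ V_i and, from the
   approximating family for dimension 2d+1, a finite B containing the supports
   of all v_i.  Reading the vectors supported on classes that meet B^d as
   functions on B^d turns the chain into a strict chain of submodules of the
   permutation representation of the group induced by Aut(B) on F^(B^d); the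
   submodules are invariant because homogeneity extends automorphisms of B to
   automorphisms of A.  In characteristic 0 Maschke's theorem yields commuting
   projections onto these submodules, and projections onto a strict chain are
   linearly independent, so n is at most the dimension of the commutant.  A
   commuting matrix is constant on the orbits of pairs of d-tuples, i.e. on the
   Aut(B)-orbits on B^(2d), so that dimension is at most the uniform bound N. *)

From mathcomp Require Import all_boot all_fingroup all_solvable all_algebra.
From mathcomp Require Import mxrepresentation boolp.
Set Implicit Arguments. Unset Strict Implicit. Unset Printing Implicit Defensive.
Import GRing.Theory.
Local Open Scope ring_scope.

Lemma rV_subspace_mx (F : fieldType) k (P : 'rV[F]_k -> Prop) :
  P 0 -> (forall u v, P u -> P v -> P (u + v)) -> (forall a u, P u -> P (a *: u)) ->
  exists U : 'M[F]_k, forall v, P v <-> (v <= U)%MS.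
Proof.
move=> P0 PD PZ.
pose Q (U : 'M[F]_k) := forall w : 'rV_k, (w <= U)%MS -> P w.
have QD U v : Q U -> P v -> Q (U + v)%MS.
  move=> QU Pv w /sub_addsmxP[[a b] /= ->]; apply: PD; first exact/QU/submxMl.
  by have /sub_rVP[c ->] := submxMl b v; apply: PZ.
pose hasQ (r : nat) := `[< exists2 U, Q U & \rank U = r >].
have Q0 : hasQ 0%N.
  by apply/asboolP; exists 0; rewrite ?mxrank0 // => w; rewrite submx0 => /eqP->.
have rk_le r : hasQ r -> (r <= k)%N.
  by move/asboolP=> [U _ <-]; apply: rank_leq_col.
have [r /asboolP[U QU rkU] maxU] := ex_maxnP (ex_intro hasQ 0%N Q0) rk_le.
exists U => v; split => [Pv|]; last exact: QU.
apply: contrapT => nvU.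
have ltU : (U < U + v)%MS.
  rewrite ltmxE addsmxSl; apply/negP => sUvU.
  by apply: nvU; apply: submx_trans sUvU; apply: addsmxSr.
have QUv : hasQ (\rank (U + v)%MS) by apply/asboolP; exists (U + v)%MS => //; apply: QD.
move: ltU; rewrite ltmxErank rkU => /andP[_ lt_r].
by have := maxU _ QUv; rewrite leqNgt lt_r.
Qed.

Lemma mxrank_le_entries (F : fieldType) m n N (C : 'M[F]_(m, n * n))
    (pos : 'I_N -> 'I_n * 'I_n) :
  (forall f : 'M_n, (mxvec f <= C)%MS -> (forall r, f (pos r).1 (pos r).2 = 0) -> f = 0) ->
  (\rank C <= N)%N.
Proof.
move=> entries_inj.
pose X := \matrix_(i, r) (i == mxvec_index (pos r).1 (pos r).2)%:R : 'M[F]_(n * n, N).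
have XE f r : (mxvec f *m X) 0 r = f (pos r).1 (pos r).2.
  rewrite mxE (bigD1 (mxvec_index (pos r).1 (pos r).2)) //= big1 => [|i /negPf ne].
    by rewrite mxE eqxx mulr1 addr0 mxvecE.
  by rewrite mxE ne mulr0.
have CX0 : (C :&: kermx X)%MS = 0.
  apply/eqP/rowV0P => v; rewrite sub_capmx => /andP[vC /sub_kermxP vX0].
  rewrite -(vec_mxK v) (entries_inj (vec_mx v)) ?linear0 ?vec_mxK // => r.
  by rewrite -XE vec_mxK vX0 mxE.
by rewrite -(mxrank_mul_ker C X) CX0 mxrank0 addn0 rank_leq_col.
Qed.

Lemma proj_chain_coef0 (F : fieldType) n (U P : nat -> 'M[F]_n) (c : nat -> F) m :
  (forall i, (i < m)%N -> (U i < U i.+1)%MS) ->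
  (forall j, (j < m)%N -> U j.+1 *m P j = U j.+1 /\ (P j <= U j.+1)%MS) ->
  \sum_(j < m) c j *: P j = 0 -> forall j, (j < m)%N -> c j = 0.
Proof.
move=> ltU projP.
have leU i j : (i <= j <= m)%N -> (U i <= U j)%MS.
  case/andP; elim: j => [|j IH]; first by rewrite leqn0 => /eqP->.
  rewrite leq_eqVlt => /orP[/eqP-> //|]; rewrite ltnS => ij jm.
  by apply: submx_trans (IH ij (ltnW jm)) _; case/andP: (ltU j jm).
elim: m ltU projP leU => [//|m IH] ltU projP leU.
rewrite big_ord_recr /= => sum0.
have cm0 : c m = 0.
  have /andP[_ /row_subPn[i nUm]] := ltU m (ltnSn m).
  set w := row i (U m.+1) in nUm.
  have wP : w *m P m = w by rewrite -row_mul (projP m (ltnSn m)).1.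
  have wPj (j : 'I_m) : (w *m P j <= U m)%MS.
    apply: submx_trans (submxMl w (P j)) _.
    apply: submx_trans (projP j (ltnW (ltn_ord j))).2 (leU _ _ _).
    by rewrite ltn_ord ltnW.
  apply: contraTeq nUm => cm_nz; rewrite -[w](scalerK cm_nz).
  have := congr1 (mulmx w) sum0; rewrite mulmx0 mulmxDr -scalemxAr wP.
  move/eqP; rewrite addrC addr_eq0 => /eqP->; rewrite scalemx_sub // eqmx_opp.
  by rewrite mulmx_sumr summx_sub // => j _; rewrite -scalemxAr scalemx_sub.
move: sum0; rewrite cm0 scale0r addr0 => sum0 j; rewrite ltnS leq_eqVlt.
case/orP=> [/eqP-> //|jm]; apply: IH sum0 j jm => [i im|j' jm'|i j' ijm].
- by apply: ltU; apply: ltnW.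
- by apply: projP; apply: ltnW.
- by case/andP: ijm => ij jm; rewrite leU // ij ltnW.
Qed.

Section CommutantDimension.
Variables (F : fieldType) (gT : finGroupType) (G : {group gT}) (n : nat).
Variable rG : mx_representation F G n.
Hypothesis F'G : ([pchar F]^'.-group G)%g.
Local Notation E_G := (enveloping_algebra_mx rG).

Lemma centgmx_proj_mx (U : 'M[F]_n) :
  mxmodule rG U -> exists P : 'M_n, [/\ centgmx rG P, U *m P = U & (P <= U)%MS].
Proof.
move=> modU; have [W modW defUW /mxdirect_addsP dxUW] := mx_Maschke_pchar rG F'G modU (submx1 U).
exists (proj_mx U W); split; last by rewrite -[proj_mx U W]mul1mx proj_mx_sub.
  by rewrite -row_full_dom_hom -sub1mx -defUW proj_mx_hom.
exact: proj_mx_id.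
Qed.

Lemma mxmodule_chain_length (U : nat -> 'M[F]_n) m :
  (forall i, (i <= m)%N -> mxmodule rG (U i)) -> (forall i, (i < m)%N -> (U i < U i.+1)%MS) ->
  (m <= \rank 'C(E_G))%N.
Proof.
move=> modU ltU.
have /choice[P projP] : forall j, exists Q : 'M_n, (j < m)%N ->
    [/\ centgmx rG Q, U j.+1 *m Q = U j.+1 & (Q <= U j.+1)%MS].
  move=> j; have [jm|_] := ltnP j m; last by exists 0.
  by have [Q] := centgmx_proj_mx (modU j.+1 jm); exists Q.
pose X := \matrix_(j < m) mxvec (P j).
have XC : (X <= 'C(E_G))%MS.
  by apply/row_subP => j; rewrite rowK memmx_cent_envelop; case: (projP j (ltn_ord j)).
have /eqP rkX : row_free X.
  rewrite -kermx_eq0; apply/rowV0P => v /sub_kermxP vX0; apply/rowP => j.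
  pose c i := oapp (fun o => v 0 o) 0 (insub i : option 'I_m).
  have cE (o : 'I_m) : c o = v 0 o by rewrite /c valK.
  have projP' i : (i < m)%N -> U i.+1 *m P i = U i.+1 /\ (P i <= U i.+1)%MS.
    by case/projP.
  have sum0 : \sum_(i < m) c i *: P i = 0.
    apply: (can_inj mxvecK); rewrite linear0 -vX0 mulmx_sum_row linear_sum.
    by apply: eq_bigr => i _; rewrite linearZ rowK cE.
  by rewrite mxE -cE (proj_chain_coef0 ltU projP' sum0 (ltn_ord j)).
by rewrite -rkX mxrankS.
Qed.

End CommutantDimension.

Section PermRepresentation.
Variables (F : fieldType) (k : nat) (G : {group {perm 'I_k}}).

Lemma perm_mx_repr : mx_repr G (@perm_mx F k).
Proof. by split=> [|p q _ _]; rewrite ?perm_mx1 ?perm_mxM. Qed.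

Definition perm_repr := MxRepresentation perm_mx_repr.

Lemma centgmx_perm_repr_entry f p a b :
  centgmx perm_repr f -> p \in G -> f (p a) (p b) = f a b.
Proof.
move/centgmxP=> cf Gp; have := congr1 (fun X : 'M[F]_k => X a (p b)) (cf p Gp).
by rewrite /= -row_permE -[p]invgK -col_permE !mxE invgK permK => ->.
Qed.

End PermRepresentation.

Lemma InP (T : eqType) (x : T) (s : seq T) : reflect (List.In x s) (x \in s).
Proof.
elim: s => [|y s IH] /=; first by right.
rewrite inE; apply: (iffP orP) => [[/eqP->|/IH]|[->|/IH]]; by [left | right].
Qed.

Section FiniteSubsets.
Variables (M : relstr) (B : carrier M -> Prop).
Local Notation A := (carrier M).

Lemma finite_subset_tuples d : finite_subset B ->
  exists k (tup : 'I_k -> 'I_d -> A),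
    [/\ forall j i, B (tup j i), injective tup & forall t, (forall i, B (t i)) -> exists j, tup j = t].
Proof.
move=> [l Bl]; pose bs := @filter {classic A} (fun x => `[< B x >]) l.
have bsP (x : {classic A}) : reflect (B x) (x \in bs).
  rewrite mem_filter; apply: (iffP andP) => [[/asboolP //]|Bx].
  by split; [apply/asboolP | apply/InP/Bl].
pose T := {ffun 'I_d -> seq_sub bs}.
exists #|T|, (fun j i => ssval (@enum_val T predT j i)); split.
- by move=> j i; apply/bsP/ssvalP.
- move=> j1 j2 e; apply/enum_val_inj/ffunP => i; apply: val_inj.
  exact: (congr1 (fun t => t i) e).
- move=> t tB; exists (enum_rank [ffun i => SeqSub (introT (bsP (t i)) (tB i))]).
  by apply/funext => i; rewrite enum_rankK ffunE.
Qed.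

Lemma at_most_orbits_reps m m' N x0 : B x0 -> (m <= m')%N -> at_most_orbits B m' N ->
  exists reps : 'I_N -> 'I_m -> A, (forall r i, B (reps r i)) /\
    forall t : 'I_m -> A, (forall i, B (t i)) -> exists r g, isSubAut B g /\ t = g \o reps r.
Proof.
move=> Bx0 le_mm' [reps [size_reps [repsB reps_cover]]].
have InP' rho : reflect (List.In rho reps) (rho \in (reps : seq ('I_m' -> {classic A}))).
  exact: (@InP ('I_m' -> {classic A})).
pose pad (t : 'I_m -> A) (i : 'I_m') := oapp t x0 (insub (val i)).
have padB t : (forall i, B (t i)) -> forall i, B (pad t i).
  by move=> tB i; rewrite /pad; case: insub.
have padK t : pad t \o widen_ord le_mm' = t by apply/funext => i; rewrite /= /pad valK.
exists (fun r => nth (fun _ => x0) reps r \o widen_ord le_mm'); split.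
  move=> r i /=; have [lt_r|ge_r] := ltnP r (size reps); last by rewrite nth_default.
  by apply/repsB/InP'; apply: mem_nth.
move=> t tB; have [rho [/InP' rho_in [g [sg g_rho]]]] := reps_cover _ (padB t tB).
pose r := @index ('I_m' -> {classic A}) rho reps.
have lt_rN : (r < N)%N by apply: leq_trans size_reps; rewrite index_mem.
exists (Ordinal lt_rN), g; split => //; apply/funext => i.
by rewrite -[t]padK /= g_rho /r (nth_index _ rho_in).
Qed.

Lemma finite_subset_coords d n (l : nat -> seq ('I_d -> A)) (x0 : A) :
  finite_subset (fun x => x = x0 \/ exists i r j, [/\ (i < n)%N, List.In r (l i) & x = r j]).
Proof.
exists (x0 :: List.flat_map (fun i => List.flat_map (fun r => List.map r (enum 'I_d)) (l i))
                            (iota 0 n)).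
move=> x [->|[i [r [j [lt_in r_l ->]]]]]; [by left | right].
apply/List.in_flat_map; exists i; split; first by apply/InP; rewrite mem_iota.
apply/List.in_flat_map; exists r; split => //.
by apply/List.in_map/InP; rewrite mem_enum.
Qed.

End FiniteSubsets.

Section SubAutomorphisms.
Variables (M : relstr) (B : carrier M -> Prop).

Lemma isSubAut_id : isSubAut B id.
Proof. by split=> //; split=> [y By|]; [exists y | split]. Qed.

Lemma isSubAut_comp g1 g2 : isSubAut B g1 -> isSubAut B g2 -> isSubAut B (g1 \o g2).
Proof.
move=> [g1B [g1_onto [g1_inj g1_rel]]] [g2B [g2_onto [g2_inj g2_rel]]].
split=> [x /g2B/g1B //|]; split=> [y /g1_onto[x1 [Bx1 <-]]|].
  by have [x2 [Bx2 <-]] := g2_onto _ Bx1; exists x2.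
split=> [x y Bx By /= e|s t Bt].
  by apply: g2_inj => //; apply: g1_inj => //; apply: g2B.
by rewrite (g2_rel s t Bt) (g1_rel s (g2 \o t)) // => i; apply: g2B.
Qed.

End SubAutomorphisms.

Section Chains.
Variables (M : relstr) (F : fieldType).
Local Notation A := (carrier M).
Variables (d : nat) (S : ('I_d -> A) -> Prop) (E : ('I_d -> A) -> ('I_d -> A) -> Prop).

Lemma equivariant_chain_witnesses n V : equivariant_chain S E n V ->
  exists (w : nat -> ('I_d -> A) -> F) (l : nat -> seq ('I_d -> A)),
    forall i, (i < n)%N -> [/\ V i.+1 (w i), ~ V i (w i) &
      forall t, w i t <> 0 -> exists r, List.In r (l i) /\ E r t].
Proof.
move=> [Veq Vsub].
have /choice[w wP] : forall i, exists v, (i < n)%N -> V i.+1 v /\ ~ V i v.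
  move=> i; have [lt_in|_] := ltnP i n; last by exists (fun=> 0).
  by move/existsNP: (Vsub i lt_in).2 => [v /not_implyP]; exists v.
have /choice[l lP] : forall i, exists l : seq ('I_d -> A),
    (i < n)%N -> forall t, w i t <> 0 -> exists r, List.In r l /\ E r t.
  move=> i; have [lt_in|_] := ltnP i n; last by exists [::].
  by have [_ [_ [l lP]]] := (Veq i.+1 lt_in).1 _ (wP i lt_in).1; exists l.
by exists w, l => i lt_in; have [V1w nVw] := wP i lt_in; split=> //; apply: lP.
Qed.

End Chains.

Section Restriction.
Variables (M : relstr) (F : fieldType).
Local Notation A := (carrier M).
Variables (d : nat) (S : ('I_d -> A) -> Prop) (E : ('I_d -> A) -> ('I_d -> A) -> Prop).
Variables (B : A -> Prop) (k : nat) (tup : 'I_k -> 'I_d -> A).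
Hypothesis tupB : forall j i, B (tup j i).
Hypothesis tup_onto : forall t, (forall i, B (t i)) -> exists j, tup j = t.

Definition supported_in (v : ('I_d -> A) -> F) :=
  forall t, v t <> 0 -> exists2 r, (forall i, B (r i)) & E r t.

Definition restr (v : ('I_d -> A) -> F) : 'rV[F]_k := \row_j v (tup j).

Definition restr_space (W : (('I_d -> A) -> F) -> Prop) (w : 'rV[F]_k) :=
  exists2 v, W v /\ supported_in v & w = restr v.

Lemma restr_inj v1 v2 : inLin S E v1 -> inLin S E v2 ->
  supported_in v1 -> supported_in v2 -> restr v1 = restr v2 -> v1 = v2.
Proof.
move=> [_ [v1E _]] [_ [v2E _]] v1B v2B /rowP restr_eq; apply/funext => t.
have eq_at r : (forall i, B (r i)) -> E r t -> v1 t = v2 t.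
  move=> rB Ert; rewrite -(v1E _ _ Ert) -(v2E _ _ Ert).
  by have [j <-] := tup_onto rB; have := restr_eq j; rewrite !mxE.
have [v1t0|/eqP/v1B[r]] := eqVneq (v1 t) 0; last exact: eq_at.
have [v2t0|/eqP/v2B[r]] := eqVneq (v2 t) 0; last exact: eq_at.
by rewrite v1t0 v2t0.
Qed.

Lemma restr_space_mx W : equivariant_subspace S E W ->
  exists U : 'M[F]_k, forall w, restr_space W w <-> (w <= U)%MS.
Proof.
move=> [_ [W0 [WD [WZ _]]]]; apply: rV_subspace_mx.
- by exists (fun=> 0); [split=> // t; case | apply/rowP => j; rewrite !mxE].
- move=> _ _ [v1 [Wv1 v1B] ->] [v2 [Wv2 v2B] ->]; exists (fun t => v1 t + v2 t).
    split=> [|t]; first exact: WD.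
    by have [->|/eqP/v1B //] := eqVneq (v1 t) 0; rewrite add0r => /v2B.
  by apply/rowP => j; rewrite !mxE.
- move=> a _ [v [Wv vB] ->]; exists (fun t => a * v t).
    split=> [|t]; first exact: WZ.
    by have [->|/eqP/vB rB _] := eqVneq (v t) 0; rewrite ?mulr0.
  by apply/rowP => j; rewrite !mxE.
Qed.

Lemma restr_chain_mx n (V : nat -> (('I_d -> A) -> F) -> Prop) :
  (forall i, (i <= n)%N -> equivariant_subspace S E (V i)) ->
  exists U : nat -> 'M[F]_k,
    forall i, (i <= n)%N -> forall u, restr_space (V i) u <-> (u <= U i)%MS.
Proof.
move=> Veq; have /choice[U UP] : forall i, exists U : 'M[F]_k,
    (i <= n)%N -> forall u, restr_space (V i) u <-> (u <= U)%MS.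
  move=> i; have [le_in|_] := leqP i n; last by exists 0.
  by have [U] := restr_space_mx (Veq i le_in); exists U.
by exists U.
Qed.

Lemma restr_space_ltmx W W' w (U U' : 'M[F]_k) :
  equivariant_subspace S E W -> equivariant_subspace S E W' ->
  (forall v, W v -> W' v) -> W' w -> ~ W w -> supported_in w ->
  (forall u, restr_space W u <-> (u <= U)%MS) ->
  (forall u, restr_space W' u <-> (u <= U')%MS) ->
  (U < U')%MS.
Proof.
move=> [WLin _] [W'Lin _] sWW' W'w nWw wB UW U'W'; rewrite ltmxE; apply/andP; split.
  apply/rV_subP => u /UW[v [Wv vB] ->].
  by apply/U'W'; exists v => //; split=> //; apply: sWW'.
apply/negP => sU'U; apply: nWw.
have /UW[v [Wv vB] /restr_inj eq_wv] : (restr w <= U)%MS.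
  by apply: submx_trans sU'U; apply/U'W'; exists w.
by rewrite eq_wv //; [apply: W'Lin | apply: WLin].
Qed.

Hypothesis tup_inj : injective tup.

Definition induced_perms : {set {perm 'I_k}} :=
  [set p : {perm 'I_k} | `[< exists2 g, isSubAut B g & forall j, tup (p j) = g \o tup j >]].

Lemma induced_perms_group_set : group_set induced_perms.
Proof.
apply/group_setP; split.
  by rewrite inE; apply/asboolP; exists id => [|j]; rewrite ?perm1 //; apply: isSubAut_id.
move=> p q; rewrite !inE => /asboolP[g1 sg1 pg1] /asboolP[g2 sg2 qg2]; apply/asboolP.
by exists (g2 \o g1) => [|j]; [apply: isSubAut_comp | rewrite permM qg2 pg1].
Qed.

Canonical induced_perms_group := Group induced_perms_group_set.
Local Notation rG := (perm_repr F induced_perms_group).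

Lemma isSubAut_induced_perm g :
  isSubAut B g -> exists2 p, p \in induced_perms & forall j, tup (p j) = g \o tup j.
Proof.
move=> sg; have [gB [_ [g_inj _]]] := sg.
have /fin_all_exists[h hE] : forall j, exists j', tup j' = g \o tup j.
  by move=> j; apply: tup_onto => i; apply: gB.
have h_inj : injective h.
  move=> j1 j2 e; apply/tup_inj/funext => i; apply: g_inj => //.
  by have := hE j2; rewrite -e hE => /(congr1 (fun t => t i)).
exists (perm h_inj) => [|j]; last by rewrite permE.
by rewrite inE; apply/asboolP; exists g => // j; rewrite permE.
Qed.

Hypothesis hom : homogeneous M.
Hypothesis B_fin : finite_subset B.
Hypothesis E_inv : forall sigma t u, isAut sigma -> E t u -> E (sigma \o t) (sigma \o u).

Lemma restr_space_perm W p w : equivariant_subspace S E W -> p \in induced_perms ->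
  restr_space W w -> restr_space W (w *m perm_mx p).
Proof.
move=> [_ [_ [_ [_ W_act]]]]; rewrite inE => /asboolP[g sg gp] [v [Wv vB] ->].
have [sig [sig_aut sig_g]] := hom B_fin sg.2.2.
have [tau sigK tauK] := sig_aut.1.
have tau_tup j : tau \o tup j = tup ((p^-1)%g j).
  have := gp ((p^-1)%g j); rewrite permKV => ->.
  by apply/funext => i /=; rewrite -sig_g ?sigK.
exists (fun t => v (tau \o t)); first split.
- exact: (W_act sig).
- move=> t /vB[r rB Ert]; exists (sig \o r) => [i|] /=; first by rewrite sig_g //; apply: sg.1.
  suff <- : sig \o (tau \o t) = t by apply: E_inv.
  by apply/funext => x /=; rewrite tauK.
- by apply/rowP => j; rewrite -[p]invgK -col_permE !mxE /= tau_tup.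
Qed.

Lemma restr_space_module W (U : 'M[F]_k) : equivariant_subspace S E W ->
  (forall w, restr_space W w <-> (w <= U)%MS) -> mxmodule rG U.
Proof.
move=> Weq UW; apply/mxmoduleP => p Gp; apply/row_subP => j.
by rewrite row_mul; apply/UW/restr_space_perm/UW/row_sub.
Qed.

Lemma induced_cent_rank_le N (reps : 'I_N -> 'I_(d + d) -> A) :
  (forall r i, B (reps r i)) ->
  (forall t, (forall i, B (t i)) -> exists r g, isSubAut B g /\ t = g \o reps r) ->
  (\rank 'C(enveloping_algebra_mx rG) <= N)%N.
Proof.
move=> repsB reps_cover.
have /fin_all_exists[pos posE] : forall r, exists ab : 'I_k * 'I_k,
    tup ab.1 = reps r \o lshift d /\ tup ab.2 = reps r \o @rshift d d.
  move=> r; have [a ea] := tup_onto (fun i => repsB r (lshift d i)).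
  by have [b eb] := tup_onto (fun i => repsB r (@rshift d d i)); exists (a, b).
apply: (@mxrank_le_entries _ _ k _ _ pos) => f; rewrite memmx_cent_envelop => cf f_pos.
apply/matrixP => j1 j2; rewrite mxE.
(* The entry (j1, j2) equals the entry at the pair of the orbit representative
   of the 2d-tuple (tup j1, tup j2). *)
pose t i := match split i with inl i1 => tup j1 i1 | inr i2 => tup j2 i2 end.
have tB i : B (t i) by rewrite /t; case: split.
have [r [g [sg t_eq]]] := reps_cover t tB.
have [p Gp gp] := isSubAut_induced_perm sg.
have [ea eb] := posE r.
have pa : p (pos r).1 = j1.
  apply: tup_inj; rewrite gp ea; change ((g \o reps r) \o lshift d = tup j1).
  by rewrite -t_eq; apply/funext => i; rewrite /t /= (unsplitK (inl i : 'I_d + 'I_d)).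
have pb : p (pos r).2 = j2.
  apply: tup_inj; rewrite gp eb; change ((g \o reps r) \o @rshift d d = tup j2).
  by rewrite -t_eq; apply/funext => i; rewrite /t /= (unsplitK (inr i : 'I_d + 'I_d)).
by rewrite -pa -pb (centgmx_perm_repr_entry _ _ cf Gp) f_pos.
Qed.

End Restriction.

Theorem mainTheorem3 (M : relstr) (F : fieldType) :
  countably_infinite M -> homogeneous M -> oligomorphic M ->
  oligomorphic_approximation M -> [pchar F]%R =i pred0 ->
  finite_length_property M F.
Proof.
(* Countability only provides a point [f0 0] of A.
   The dimension is 2d+1 rather than 2d because the approximation is only
   assumed in positive dimension. *)
move=> [f0 _] hom _ approx charF0 d S E [_ [_ [_ [_ [_ E_inv]]]]].
have [Bs [Bs_fin [Bs_cover [N orbitsN]]]] := approx (d + d).+1 isT.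
exists N => n V chainV; have [Veq Vsub] := chainV.
have [w [l wP]] := equivariant_chain_witnesses chainV.
have [B [BsB CB]] := Bs_cover _ (finite_subset_coords n l (f0 0%N)).
have B_fin := Bs_fin B BsB.
have [reps [repsB reps_cover]] :=
  at_most_orbits_reps (CB _ (or_introl erefl)) (leqnSn _) (orbitsN B BsB).
have [k [tup [tupB tup_inj tup_onto]]] := finite_subset_tuples d B_fin.
have [U UP] := restr_chain_mx B tup Veq.
apply: leq_trans (induced_cent_rank_le F tupB tup_onto tup_inj repsB reps_cover).
apply: (mxmodule_chain_length _ (U := U)) => [|i le_in|i lt_in].
- by rewrite /pgroup pcharf'_nat (pcharf0P _).1 // -lt0n cardG_gt0.
- exact: (restr_space_module tupB hom B_fin E_inv (Veq i le_in) (UP i le_in)).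
- have [V1w nVw w_supp] := wP i lt_in; have le_in := ltnW lt_in.
  apply: (restr_space_ltmx tup_onto (Veq i le_in) (Veq i.+1 lt_in) (Vsub i lt_in).1 V1w nVw _
            (UP i le_in) (UP i.+1 lt_in)).
  move=> t /w_supp[r [r_l Ert]]; exists r => // j.
  by apply: CB; right; exists i, r, j.
Qed.
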